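(* Let $r\ge 2$, $e\ge 1$ and $0\le p\le\lfloor re/2\rfloor$ be integers, and let $Q$ be a generic binary form of degree $r$ (i.e. with indeterminate coefficients). Then the transvectant $(Q^e,Q^e)_{2p}$ is not identically zero.
   Context: For binary forms $A(x_0,x_1)$, $B(x_0,x_1)$ of degrees $a,b$ and an integer $k\ge0$, the $k$-th transvectant is $(A,B)_k=\frac{(a-k)!\,(b-k)!}{a!\,b!}\bigl[\Omega^k A(x_0,x_1)B(y_0,y_1)\bigr]_{\underline{y}:=\underline{x}}$, where $\Omega=\frac{\partial^2}{\partial x_0\partial y_1}-\frac{\partial^2}{\partial x_1\partial y_0}$ (Cayley's Omega operator); it is a binary form of degree $a+b-2k$. *)

From HB Require Import structures.
From mathcomp Require Import all_boot all_order all_algebra.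
From mathcomp Require Import mpoly.
Set Implicit Arguments. Unset Strict Implicit. Unset Printing Implicit Defensive.
Import GRing.Theory.
Local Open Scope ring_scope.

(* Binary forms over a commutative ring R are elements of {mpoly R[2]},
   variable 0 = x_0, variable 1 = x_1.  For Omega we work in {mpoly R[4]}
   with variables 0,1,2,3 = x_0, x_1, y_0, y_1. *)

Section Transvectant.
Variable R : comRingType.

Definition X4 (i : nat) : {mpoly R[4]} := 'X_(inord i).

Definition liftx (A : {mpoly R[2]}) : {mpoly R[4]} := A \mPo [tuple X4 0; X4 1].
Definition lifty (B : {mpoly R[2]}) : {mpoly R[4]} := B \mPo [tuple X4 2; X4 3].

Definition Omega (P : {mpoly R[4]}) : {mpoly R[4]} :=
  mderiv (inord 0) (mderiv (inord 3) P) - mderiv (inord 1) (mderiv (inord 2) P).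

Definition diagxy (P : {mpoly R[4]}) : {mpoly R[2]} :=
  P \mPo [tuple 'X_(inord 0); 'X_(inord 1); 'X_(inord 0); 'X_(inord 1)].

End Transvectant.

Section TransvectantField.
Variable F : fieldType.

Definition transvectant (m : nat) (a b k : nat) (A B : {mpoly {mpoly F[m]}[2]})
  : {mpoly {mpoly F[m]}[2]} :=
  ((((a - k)`! * (b - k)`!)%:R / (a`! * b`!)%:R : F)%:MP)%:MP *
  diagxy (iter k (@Omega _) (liftx A * lifty B)).

Definition generic_form (r : nat) : {mpoly {mpoly F[r.+1]}[2]} :=
  \sum_(i < r.+1) ('X_i)%:MP * 'X_(inord 0) ^+ (r - i) * 'X_(inord 1) ^+ i.

End TransvectantField.

From HB Require Import structures.
From mathcomp Require Import all_boot all_order all_algebra.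
From mathcomp Require Import mpoly zify ring.
Set Implicit Arguments. Unset Strict Implicit. Unset Printing Implicit Defensive.
Import GRing.Theory.
Local Open Scope ring_scope.

(* Specialise the coefficients of Q so that it becomes
   x0^(r mod 2) (x0^2 + x1^2)^(r/2), and evaluate the transvectant at x = (1,0).
   Writing Omega = D1 - D2 with the commuting operators D1 = d/dx0 d/dy1 and
   D2 = d/dx1 d/dy0, the binomial theorem turns (A,A)_k(1,0) into a signed sum
   of products of partial derivatives of A at (1,0).  For
   A = x0^a (x0^2 + x1^2)^M a derivative of odd order in x1 vanishes at (1,0),
   so only even powers of -1 survive: the value is a nonnegative integer, and
   the term with j = 2 floor(p/2) is positive.  In characteristic 0 the
   transvectant is therefore nonzero. *)

Section IterBinomial.
Variables (R : pzRingType) (V : lmodType R) (f g : {linear V -> V}).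
Hypothesis fgC : forall x, f (g x) = g (f x).

Lemma iterBn_comm k x :
  iter k (fun y => f y - g y) x =
  \sum_(j < k.+1) ((-1) ^+ (k - j) *+ 'C(k, j)) *: iter j f (iter (k - j) g x).
Proof.
have g_iter j y : g (iter j f y) = iter j f (g y).
  by elim: j => //= j IHj; rewrite -fgC IHj.
elim: k => [|k IH]; first by rewrite big_ord1 scale1r.
pose a j := iter j f (iter (k.+1 - j) g x).
pose c j : R := (-1) ^+ (k - j) *+ 'C(k, j).
have shifted : \sum_(j < k.+1) c j *: a j.+1 =
    \sum_(j < k.+2) ((-1) ^+ (k.+1 - j) *+ ('C(k, j.-1) * (0 < j)%N)) *: a j.
  rewrite [RHS]big_ord_recl muln0 mulr0n scale0r add0r.
  by apply: eq_bigr => j _; rewrite muln1.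
have unshifted : \sum_(j < k.+1) c j *: a j =
    - \sum_(j < k.+2) ((-1) ^+ (k.+1 - j) *+ 'C(k, j)) *: a j.
  rewrite [in RHS]big_ord_recr /= bin_small // mulr0n (scale0r (a k.+1)) addr0.
  rewrite -sumrN; apply: eq_bigr => j _.
  by rewrite /c (subSn (ltnSE (ltn_ord j))) exprS mulN1r mulNrn scaleNr opprK.
rewrite iterS IH /= !linear_sum /=.
transitivity (\sum_(j < k.+1) c j *: a j.+1 - \sum_(j < k.+1) c j *: a j).
  rewrite -sumrB -big_split /=; apply: eq_bigr => j _.
  by rewrite !linearZ /= g_iter /a subSS (subSn (ltnSE (ltn_ord j))).
rewrite shifted unshifted opprK -big_split /=.
apply: eq_bigr => -[[|j] ?] _ /=; first by rewrite muln0 mulr0n scale0r add0r !bin0.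
by rewrite -scalerDl muln1 -mulrnDr binS addnC.
Qed.

End IterBinomial.

Lemma sum_nat_even (V : nmodType) (g : nat -> V) r :
  (forall i, odd i -> g i = 0) ->
  \sum_(0 <= i < r.+1) g i = \sum_(0 <= j < (r./2).+1) g j.*2.
Proof.
move=> g_odd; elim: r => [|r IH]; first by rewrite !big_nat1.
rewrite big_nat_recr //= IH uphalf_half.
have [odd_r | even_r] := boolP (odd r); last by rewrite g_odd ?addr0 //= even_r.
by rewrite [in RHS]big_nat_recr //= doubleS -[r in g r.+1](odd_double_half r) odd_r.
Qed.

Lemma inord_eq n (a b : nat) :
  (a <= n)%N -> (b <= n)%N -> ((inord a : 'I_n.+1) == inord b) = (a == b).
Proof. by move=> a_le b_le; rewrite -val_eqE /= !inordK. Qed.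

Section MPolyDeriv.
Variable R : comNzRingType.

Lemma mderivXU n (i j : 'I_n) : ('X_j : {mpoly R[n]})^`M(i) = (j == i)%:R.
Proof.
rewrite mderivX mnm1E; have [->|_] := eqVneq j i; last by rewrite scale0r.
have -> : (U_(i) - U_(i))%MM = 0%MM by apply/mnmP => l; rewrite mnmBE subnn mnm0E.
by rewrite scale1r mpolyX0.
Qed.

Lemma mderivnC n (i j : 'I_n) a b (P : {mpoly R[n]}) :
  P^`M(i, a)^`M(j, b) = P^`M(j, b)^`M(i, a).
Proof. by rewrite -!mderivmDm addmC. Qed.

Lemma mderiv_comp_mpoly n k (lq : n.-tuple {mpoly R[k]}) i (p : {mpoly R[n]}) :
  (p \mPo lq)^`M(i) = \sum_(j < n) (p^`M(j) \mPo lq) * (tnth lq j)^`M(i).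
Proof.
move: p; pose P (p : {mpoly R[n]}) :=
  (p \mPo lq)^`M(i) = \sum_(j < n) (p^`M(j) \mPo lq) * (tnth lq j)^`M(i).
have P1 : P 1.
  rewrite /P rmorph1 mderivC big1 // => j _.
  by rewrite -mpolyC1 mderivC raddf0 mul0r.
have PX j : P 'X_j.
  rewrite /P comp_mpolyXU -tnth_nth (bigD1 j) //= mderivXU eqxx.
  rewrite rmorph1 mul1r big1 ?addr0 // => l ne_lj.
  by rewrite mderivXU eq_sym (negbTE ne_lj) raddf0 mul0r.
have PM p q : P p -> P q -> P (p * q).
  rewrite /P rmorphM mderivM => -> ->; rewrite mulr_suml mulr_sumr -big_split /=.
  by apply: eq_bigr => j _; rewrite mderivM rmorphD !rmorphM /=; ring.
elim/mpolyind => [|c m q _ _ IHq].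
  by rewrite rmorph0 mderiv0 big1 // => j _; rewrite mderiv0 rmorph0 mul0r.
have PXm : P 'X_[m].
  rewrite mpolyXE_id; apply: (big_ind P P1 PM) => j _.
  by elim: (m j) => [|e IHe]; rewrite ?exprS; [exact: P1 | exact: PM].
rewrite /P comp_mpolyD mderivD IHq comp_mpolyZ mderivZ PXm scaler_sumr -big_split /=.
apply: eq_bigr => j _.
by rewrite mderivD mderivZ comp_mpolyD comp_mpolyZ mulrDl scalerAl.
Qed.

End MPolyDeriv.

Section MapMPoly.
Variables (R S : comNzRingType) (f : {rmorphism R -> S}).

Lemma meval_map n (P : {mpoly R[n]}) v : (map_mpoly f P).@[f \o v] = f P.@[v].
Proof.
elim/mpolyind: P => [|c m P _ _ IHP]; first by rewrite !raddf0.
rewrite !raddfD /= IHP map_mpolyZ !mevalZ map_mpolyX !mevalX rmorphM rmorph_prod /=.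
by congr (_ * _ + _); apply: eq_bigr => i _; rewrite rmorphXn.
Qed.

Lemma mderiv_map n i (P : {mpoly R[n]}) : (map_mpoly f P)^`M(i) = map_mpoly f P^`M(i).
Proof.
by apply/mpolyP => m; rewrite mcoeff_map_mpoly !mcoeff_mderiv raddfMn mcoeff_map_mpoly.
Qed.

Lemma mderivn_map n i a (P : {mpoly R[n]}) :
  (map_mpoly f P)^`M(i, a) = map_mpoly f P^`M(i, a).
Proof. by rewrite !mderivn_iter; elim: a => //= a ->; rewrite mderiv_map. Qed.

End MapMPoly.

Local Notation i0 := (@ord0 1).
Local Notation i1 := (@ord_max 1).

Section Omega.
Variable R : comNzRingType.

Lemma mderiv_comp2 k (u v i : 'I_k) (p : {mpoly R[2]}) :
  (p \mPo [tuple 'X_u; 'X_v])^`M(i) =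
    (p^`M(i0) \mPo [tuple 'X_u; 'X_v]) * (u == i)%:R +
    (p^`M(i1) \mPo [tuple 'X_u; 'X_v]) * (v == i)%:R.
Proof.
rewrite mderiv_comp_mpoly big_ord_recr big_ord1 /= !(tnth_nth 0) /= !mderivXU.
by rewrite (_ : widen_ord _ _ = i0) //; apply: val_inj.
Qed.

Lemma mderiv30_liftx_lifty (A B : {mpoly R[2]}) :
  (liftx A * lifty B)^`M(inord 3)^`M(inord 0) = liftx A^`M(i0) * lifty B^`M(i1).
Proof.
rewrite /liftx /lifty /X4.
by do 2 rewrite mderivM !mderiv_comp2 !inord_eq //= !(mulr0, mulr1, addr0, add0r, mul0r).
Qed.

Lemma mderiv21_liftx_lifty (A B : {mpoly R[2]}) :
  (liftx A * lifty B)^`M(inord 2)^`M(inord 1) = liftx A^`M(i1) * lifty B^`M(i0).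
Proof.
rewrite /liftx /lifty /X4.
by do 2 rewrite mderivM !mderiv_comp2 !inord_eq //= !(mulr0, mulr1, addr0, add0r, mul0r).
Qed.

Local Notation Dx0y1 := (mderiv (inord 0) \o mderiv (inord 3)).
Local Notation Dx1y0 := (mderiv (inord 1) \o mderiv (inord 2)).

Lemma iter_Dx0y1_lift j (A B : {mpoly R[2]}) :
  iter j Dx0y1 (liftx A * lifty B) = liftx A^`M(i0, j) * lifty B^`M(i1, j).
Proof.
elim: j => [|j IH]; first by rewrite !mderivn0.
by rewrite iterS IH /= mderiv30_liftx_lifty -!mderivnS.
Qed.

Lemma iter_Dx1y0_lift j (A B : {mpoly R[2]}) :
  iter j Dx1y0 (liftx A * lifty B) = liftx A^`M(i1, j) * lifty B^`M(i0, j).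
Proof.
elim: j => [|j IH]; first by rewrite !mderivn0.
by rewrite iterS IH /= mderiv21_liftx_lifty -!mderivnS.
Qed.

Lemma iter_Omega_lift k (A B : {mpoly R[2]}) :
  iter k (@Omega R) (liftx A * lifty B) =
  \sum_(j < k.+1) ((-1) ^+ (k - j) *+ 'C(k, j)) *:
    (liftx A^`M(i1, k - j)^`M(i0, j) * lifty B^`M(i0, k - j)^`M(i1, j)).
Proof.
rewrite (@iterBn_comm _ _ Dx0y1 Dx1y0); last first.
  move=> P /=; rewrite [_^`M(inord 1)^`M(inord 3)]mderiv_comm.
  rewrite [_^`M(inord 2)^`M(inord 3)]mderiv_comm [_^`M(inord 1)^`M(inord 0)]mderiv_comm.
  by rewrite [_^`M(inord 2)^`M(inord 0)]mderiv_comm.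
by apply: eq_bigr => j _; rewrite iter_Dx1y0_lift iter_Dx0y1_lift.
Qed.

(* At [n = 2] this is the point [x = (1,0)], at [n = 4] the point [x = y = (1,0)]. *)
Definition even_pt n (i : 'I_n) : R := (~~ odd i)%:R.
Arguments even_pt : clear implicits.

Lemma meval_liftx A : (liftx A).@[even_pt 4] = A.@[even_pt 2].
Proof.
rewrite /liftx comp_mpoly_meval; apply: meval_eq => -[[|[|i]] ?] //=;
  by rewrite (tnth_nth 0) /= /X4 mevalXU /even_pt inordK.
Qed.

Lemma meval_lifty B : (lifty B).@[even_pt 4] = B.@[even_pt 2].
Proof.
rewrite /lifty comp_mpoly_meval; apply: meval_eq => -[[|[|i]] ?] //=;
  by rewrite (tnth_nth 0) /= /X4 mevalXU /even_pt inordK.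
Qed.

Lemma meval_diagxy P : (diagxy P).@[even_pt 2] = P.@[even_pt 4].
Proof.
rewrite /diagxy comp_mpoly_meval; apply: meval_eq => -[[|[|[|[|i]]]] ?] //=;
  by rewrite (tnth_nth 0) /= mevalXU /even_pt inordK.
Qed.

Definition deriv_at10 a b (P : {mpoly R[2]}) : R := (P^`M(i1, b)^`M(i0, a)).@[even_pt 2].

Definition omega_pairing k (A B : {mpoly R[2]}) : R :=
  \sum_(j < k.+1) ((-1) ^+ (k - j) *+ 'C(k, j)) *
    (deriv_at10 j (k - j) A * deriv_at10 (k - j) j B).

Lemma meval_iter_Omega k (A B : {mpoly R[2]}) :
  (diagxy (iter k (@Omega R) (liftx A * lifty B))).@[even_pt 2] = omega_pairing k A B.
Proof.
rewrite meval_diagxy iter_Omega_lift raddf_sum; apply: eq_bigr => j _.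
by rewrite /= mevalZ mevalM meval_liftx meval_lifty [B^`M(_, _)^`M(_, _)]mderivnC.
Qed.

End Omega.

Arguments even_pt {R} n i.

Section MapOmega.
Variables (R S : comNzRingType) (f : {rmorphism R -> S}).

Lemma deriv_at10_map a b (P : {mpoly R[2]}) :
  deriv_at10 a b (map_mpoly f P) = f (deriv_at10 a b P).
Proof.
rewrite /deriv_at10 !mderivn_map -meval_map; apply: meval_eq => i /=.
by rewrite rmorph_nat.
Qed.

Lemma omega_pairing_map k (A B : {mpoly R[2]}) :
  omega_pairing k (map_mpoly f A) (map_mpoly f B) = f (omega_pairing k A B).
Proof.
rewrite rmorph_sum; apply: eq_bigr => j _.
by rewrite !rmorphM rmorphMn rmorphXn rmorphN1 !deriv_at10_map.
Qed.

End MapOmega.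

Lemma meval_transvectant (F : fieldType) m a b k (A B : {mpoly {mpoly F[m]}[2]}) :
  (transvectant a b k A B).@[even_pt 2] =
  (((a - k)`! * (b - k)`!)%:R / (a`! * b`!)%:R : F)%:MP * omega_pairing k A B.
Proof. by rewrite /transvectant mevalM mevalC meval_iter_Omega. Qed.

Section SquareForm.
Variable R : comNzRingType.

Definition sqform al M : {mpoly R[2]} := 'X_i0 ^+ al * ('X_i0 ^+ 2 + 'X_i1 ^+ 2) ^+ M.

Definition mon2 u v : 'X_{1..2} := (U_(i0) *+ u + U_(i1) *+ v)%MM.

Lemma sqformX al M e : sqform al M ^+ e = sqform (al * e) (M * e).
Proof. by rewrite /sqform exprMn -!exprM. Qed.

Lemma sqform_expand al M :
  sqform al M = \sum_(i < M.+1) 'X_[mon2 (al + (M - i).*2) i.*2] *+ 'C(M, i).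
Proof.
rewrite /sqform exprDn mulr_sumr; apply: eq_bigr => i _.
rewrite mulrnAr mulrA -!exprM -exprD /mon2 mpolyXD -!mpolyXn.
by rewrite -!muln2 ![(2 * _)%N]mulnC.
Qed.

Lemma deriv_at10_monomial u v a b :
  deriv_at10 a b 'X_[mon2 u v] = (if v == b then u ^_ a * b`! else 0)%:R :> R.
Proof.
rewrite /deriv_at10 !mderivnX mderivmZ mderivnX mevalZ mevalZ mevalX.
rewrite big_ord_recr big_ord1 /= /even_pt /=.
rewrite !mnmBE !mnmDE !mulmnE !mnm1E /= !mul0n !mul1n !add0n !addn0 !subn0.
rewrite expr1n mul1r expr0n subn_eq0 -!natrM; congr _%:R.
case: ltngtP => [/ffact_small-> // | _ | ->]; first by rewrite !muln0.
by rewrite ffactnn muln1 mulnC.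
Qed.

Definition sqform_dcoef al M a b : nat :=
  if odd b then 0 else 'C(M, b./2) * ((al + M.*2 - b) ^_ a * b`!).

Lemma deriv_at10_sqform al M a b :
  deriv_at10 a b (sqform al M) = (sqform_dcoef al M a b)%:R.
Proof.
rewrite sqform_expand /deriv_at10 !raddf_sum /=.
under eq_bigr => i _ do rewrite !raddfMn /= -/(deriv_at10 a b _)
  deriv_at10_monomial -[_ *+ 'C(M, i)]mulr_natr -natrM.
rewrite -natr_sum /sqform_dcoef; congr _%:R.
case: ifP => [odd_b | even_b].
  by apply: big1 => i _; case: eqP odd_b => // <-; rewrite odd_double.
have [h ->] : exists h, b = h.*2 by exists b./2; rewrite -[LHS]odd_double_half even_b.
under eq_bigr => i _ do rewrite (inj_eq double_inj).
rewrite doubleK; have [h_le_M | M_lt_h] := leqP h M; last first.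
  rewrite bin_small // big1 // => i _.
  by rewrite ltn_eqF // (leq_trans (ltn_ord i) M_lt_h).
rewrite (bigD1 (Ordinal (h_le_M : (h < M.+1)%N))) //= eqxx big1 => [|i]; last first.
  by rewrite -val_eqE => /negbTE ->.
by rewrite addn0 mulnC doubleB addnBA ?leq_double.
Qed.

Lemma omega_pairing_sqform al M k :
  omega_pairing k (sqform al M) (sqform al M) =
  (\sum_(j < k.+1)
     'C(k, j) * (sqform_dcoef al M j (k - j) * sqform_dcoef al M (k - j) j))%:R.
Proof.
rewrite natr_sum; apply: eq_bigr => j _; rewrite !deriv_at10_sqform.
have [odd_kj | even_kj] := boolP (odd (k - j)).
  by rewrite [sqform_dcoef _ _ j _]/sqform_dcoef odd_kj mul0r mulr0 mul0n muln0.
by rewrite -signr_odd (negbTE even_kj) expr0 !natrM.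
Qed.

End SquareForm.

Arguments sqform {R} al M.

Lemma sqform_dcoef_gt0 al M a h :
  (h <= M)%N -> (a + h.*2 <= al + M.*2)%N -> (0 < sqform_dcoef al M a h.*2)%N.
Proof.
move=> h_le_M a_le; rewrite /sqform_dcoef odd_double doubleK.
by rewrite !muln_gt0 bin_gt0 h_le_M ffact_gt0 fact_gt0 andbT /=; lia.
Qed.

Lemma sqform_pairing_gt0 al M p :
  (p.*2 <= al + M.*2)%N -> (uphalf p <= M)%N ->
  (0 < \sum_(j < (p.*2).+1)
         'C(p.*2, j) * (sqform_dcoef al M j (p.*2 - j) * sqform_dcoef al M (p.*2 - j) j))%N.
Proof.
move=> p2_le up_le; have p_split : (p./2.*2 + (uphalf p).*2 = p.*2)%N.
  by rewrite -doubleD uphalf_half addnCA -[in RHS](odd_double_half p) addnn.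
have j0_lt : (p./2.*2 < (p.*2).+1)%N by rewrite ltnS -p_split leq_addr.
have k_j0 : (p.*2 - p./2.*2 = (uphalf p).*2)%N by rewrite -p_split addKn.
rewrite (bigD1 (Ordinal j0_lt)) //= addn_gt0 k_j0 !muln_gt0 bin_gt0 -ltnS j0_lt.
rewrite !sqform_dcoef_gt0 // ?p_split //; last by rewrite addnC p_split.
by rewrite (leq_trans _ up_le) // uphalf_half leq_addl.
Qed.

Definition sqform_coefs (F : fieldType) r (i : 'I_r.+1) : F :=
  if odd i then 0 else ('C(r./2, i./2))%:R.
Arguments sqform_coefs : clear implicits.

Lemma generic_form_sqform (F : fieldType) r :
  map_mpoly (meval (sqform_coefs F r)) (generic_form F r) = sqform (odd r) r./2.
Proof.
rewrite /generic_form rmorph_sum /= (inord_val i0) (inord_val i1).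
pose c i : F := if odd i then 0 else ('C(r./2, i./2))%:R.
transitivity (\sum_(0 <= i < r.+1) (c i)%:MP * 'X_i0 ^+ (r - i) * 'X_i1 ^+ i).
  rewrite big_mkord; apply: eq_bigr => i _.
  rewrite !rmorphM !rmorphXn /= map_mpolyC !map_mpolyX.
  by congr (_%:MP * _ * _); exact: mevalXU.
rewrite sum_nat_even => [|i odd_i]; last by rewrite /c odd_i mpolyC0 !mul0r.
rewrite /sqform exprDn mulr_sumr big_mkord; apply: eq_bigr => j _.
rewrite /c odd_double doubleK mpolyC_nat mulr_natl mulrnAl !mulrnAr; congr (_ *+ _).
rewrite -!exprM mulrA -exprD; congr (_ ^+ _ * _ ^+ _).
  by have := odd_double_half r; have := ltn_ord j; rewrite -!muln2; lia.
by rewrite -muln2 mulnC.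
Qed.

Lemma half_mul_bounds r e p :
  (2 <= r)%N -> (1 <= e)%N -> (p <= (r * e)./2)%N ->
  (p.*2 <= odd r * e + (r./2 * e).*2)%N /\ (uphalf p <= r./2 * e)%N.
Proof.
move=> r_ge2 e_ge1 p_le.
have re_split : (r * e = odd r * e + (r./2 * e).*2)%N.
  by rewrite doubleMl -mulnDl odd_double_half.
have he_ge : (e <= r./2 * e)%N by rewrite leq_pmull // geq_half_double.
have := odd_double_half (r * e); have := odd_double_half p; have := odd_double_half e.
rewrite uphalf_half re_split; move: p_le he_ge; rewrite re_split.
by case: (odd r); rewrite ?mul1n ?mul0n; set x := (r./2 * e)%N; lia.
Qed.

Theorem mainTheorem4 (F : fieldType) (F_char0 : [pchar F] =i pred0)
  (r e p : nat) (hr : (2 <= r)%N) (he : (1 <= e)%N) (hp : (p <= (r * e)./2)%N) :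
  transvectant (r * e) (r * e) (2 * p)
    (generic_form F r ^+ e) (generic_form F r ^+ e) != 0.
Proof.
have natF_eq0 := (pcharf0P F).1 F_char0.
have [p2_le up_le] := half_mul_bounds hr he hp.
pose spec := meval (sqform_coefs F r).
have spec_Qe : map_mpoly spec (generic_form F r ^+ e) = sqform (odd r * e) (r./2 * e).
  by rewrite rmorphXn /= generic_form_sqform sqformX.
apply/eqP => /(congr1 (fun T => spec T.@[even_pt 2])) /eqP.
rewrite /spec meval_transvectant !meval0 mevalM mevalC -omega_pairing_map spec_Qe.
rewrite omega_pairing_sqform mul2n !mulf_eq0 invr_eq0 !natF_eq0 !muln_eq0.
by rewrite !gtn_eqF ?fact_gt0 ?sqform_pairing_gt0.
Qed.
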